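(* Let $K$ be a field and let $f\colon R\to S$ be a morphism of Zinbiel algebras over $K$. For $i=1,2$, the maps $d^i_f\colon C^i_{\mathrm{Zinb}}(f,f)\to C^{i+1}_{\mathrm{Zinb}}(f,f)$ defined below satisfy $d^{i+1}_f\circ d^i_f=0$.
   Context: A Zinbiel algebra (dual Leibniz algebra) over $K$ is a $K$-vector space $R$ with a $K$-bilinear product $(x,y)\mapsto x\cdot y$ satisfying $(x\cdot y)\cdot z = x\cdot(y\cdot z)+x\cdot(z\cdot y)$ for all $x,y,z\in R$. A morphism $f\colon R\to S$ is a $K$-linear map with $f(x\cdot y)=f(x)\cdot f(y)$. An $R$-bimodule is a $K$-vector space $A$ with bilinear maps $R\otimes A\to A$, $A\otimes R\to A$ such that the Zinbiel identity holds whenever exactly one of $x,y,z$ lies in $A$ and the others in $R$. $R$ is an $R$-bimodule via its product, $S$ is an $S$-bimodule via its product, and $S$ is an $R$-bimodule via $r\cdot s=f(r)\cdot s$, $s\cdot r=s\cdot f(r)$. For an $R$-bimodule $A$ and $1\le n\le 4$ put $C^n_{\mathrm{Zinb}}(R,A)=\mathrm{Hom}_K(R^{\otimes n},A)$, and define $d^i\colon C^i_{\mathrm{Zinb}}(R,A)\to C^{i+1}_{\mathrm{Zinb}}(R,A)$ for $i=1,2,3$ by $(d^1\varphi)(x,y)=x\cdot\varphi(y)-\varphi(x\cdot y)+\varphi(x)\cdot y$, $(d^2\varphi)(x,y,z)=x\cdot(\varphi(y,z)+\varphi(z,y))-\varphi(x\cdot y,z)+\varphi(x,y\cdot z+z\cdot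 y)-\varphi(x,y)\cdot z$, $(d^3\varphi)(x,y,z,w)=x\cdot\{\varphi(y,z,w)-\varphi(z,w,y)+\varphi(z,y,w)-\varphi(w,z,y)\}-\varphi(x\cdot y,z,w)+\varphi(x,y\cdot z+z\cdot y,w)-\varphi(x,y,z\cdot w+w\cdot z)+\varphi(x,y,z)\cdot w$. Set $C^0_{\mathrm{Zinb}}(R,S)=0$ and $d^0=0$. For $1\le n\le 4$ let $C^n_{\mathrm{Zinb}}(f,f)=C^n_{\mathrm{Zinb}}(R,R)\times C^n_{\mathrm{Zinb}}(S,S)\times C^{n-1}_{\mathrm{Zinb}}(R,S)$ and for $1\le i\le 3$ define $d^i_f(\xi;\pi;\varphi)=(d^i\xi;\,d^i\pi;\,f\xi-\pi f-d^{i-1}\varphi)$, where $(f\xi)(x_1,\dots,x_i)=f(\xi(x_1,\dots,x_i))$ and $(\pi f)(x_1,\dots,x_i)=\pi(f(x_1),\dots,f(x_i))$ for $x_j\in R$, and $d^{i-1}\varphi$ is computed in $C^*_{\mathrm{Zinb}}(R,S)$ with $S$ an $R$-bimodule via $f$. *)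

From HB Require Import structures.
From mathcomp Require Import all_boot all_algebra.
Set Implicit Arguments. Unset Strict Implicit. Unset Printing Implicit Defensive.
Import GRing.Theory.
Local Open Scope ring_scope.

Section ZinbDefs.
Variable K : fieldType.

Definition is_zinbiel (R : lmodType K) (mul : R -> R -> R) : Prop :=
  [/\ (forall (a : K) (x y z : R), mul (a *: x + y) z = a *: mul x z + mul y z),
      (forall (a : K) (x y z : R), mul x (a *: y + z) = a *: mul x y + mul x z)
    & (forall x y z : R, mul (mul x y) z = mul x (mul y z) + mul x (mul z y))].

Definition is_zinb_morphism (R S : lmodType K) (mulR : R -> R -> R)
  (mulS : S -> S -> S) (f : R -> S) : Prop :=
  [/\ (forall (a : K) (x y : R), f (a *: x + y) = a *: f x + f y)
    & (forall x y : R, f (mulR x y) = mulS (f x) (f y))].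

(* Cochains C^n(R,A) = Hom_K(R^{(x)n}, A) are represented as K-multilinear
   maps R -> ... -> A. *)
Definition multilinear1 (R A : lmodType K) (g : R -> A) : Prop :=
  forall (a : K) (x y : R), g (a *: x + y) = a *: g x + g y.

Definition multilinear2 (R A : lmodType K) (g : R -> R -> A) : Prop :=
  (forall (a : K) (x y z : R), g (a *: x + y) z = a *: g x z + g y z) /\
  (forall (a : K) (x y z : R), g x (a *: y + z) = a *: g x y + g x z).

Variables (R A : lmodType K) (mul : R -> R -> R)
  (lact : R -> A -> A) (ract : A -> R -> A).

Definition zd1 (phi : R -> A) : R -> R -> A :=
  fun x y => lact x (phi y) - phi (mul x y) + ract (phi x) y.

Definition zd2 (phi : R -> R -> A) : R -> R -> R -> A :=
  fun x y z => lact x (phi y z + phi z y) - phi (mul x y) z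
    + phi x (mul y z + mul z y) - ract (phi x y) z.

Definition zd3 (phi : R -> R -> R -> A) : R -> R -> R -> R -> A :=
  fun x y z w => lact x (phi y z w - phi z w y + phi z y w - phi w z y)
    - phi (mul x y) z w + phi x (mul y z + mul z y) w
    - phi x y (mul z w + mul w z) + ract (phi x y z) w.

End ZinbDefs.

Section MorphCochains.
Variables (K : fieldType) (R S : lmodType K) (mulR : R -> R -> R)
  (mulS : S -> S -> S) (f : R -> S).

(* S as an R-bimodule via f *)
Definition lactf (r : R) (s : S) : S := mulS (f r) s.
Definition ractf (s : S) (r : R) : S := mulS s (f r).

(* C^1(f,f) = C^1(R,R) x C^1(S,S) x C^0(R,S), with C^0(R,S) = 0 (unit);
   d^0 = 0. *)
Definition df1 (c : (R -> R) * (S -> S) * unit) :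
  (R -> R -> R) * (S -> S -> S) * (R -> S) :=
  let: (xi, pi, _) := c in
  (zd1 mulR mulR mulR xi,
   zd1 mulS mulS mulS pi,
   fun x => f (xi x) - pi (f x) - 0).

Definition df2 (c : (R -> R -> R) * (S -> S -> S) * (R -> S)) :
  (R -> R -> R -> R) * (S -> S -> S -> S) * (R -> R -> S) :=
  let: (xi, pi, phi) := c in
  (zd2 mulR mulR mulR xi,
   zd2 mulS mulS mulS pi,
   fun x y => f (xi x y) - pi (f x) (f y) - zd1 mulR lactf ractf phi x y).

Definition df3 (c : (R -> R -> R -> R) * (S -> S -> S -> S) * (R -> R -> S)) :
  (R -> R -> R -> R -> R) * (S -> S -> S -> S -> S) * (R -> R -> R -> S) :=
  let: (xi, pi, phi) := c in
  (zd3 mulR mulR mulR xi,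
   zd3 mulS mulS mulS pi,
   fun x y z => f (xi x y z) - pi (f x) (f y) (f z)
                - zd2 mulR lactf ractf phi x y z).

End MorphCochains.

From HB Require Import structures.
From mathcomp Require Import all_boot all_algebra.

Set Implicit Arguments.
Unset Strict Implicit.
Unset Printing Implicit Defensive.

Import GRing.Theory.
Local Open Scope ring_scope.

(* The R- and S-components are the identities d^2 d^1 = 0 and
   d^3 d^2 = 0 for a Zinbiel algebra acting on a bimodule. Once everything is
   expanded by biadditivity and every left-nested product is rewritten with
   the Zinbiel identity, only right-normed terms remain, and they cancel
   formally. The mixed component of d_f is built from f o -, - o f and the
   coboundary of S viewed as an R-bimodule through f; since that coboundary
   commutes with post- and precomposition by the morphism f, the mixed
   component of d_f d_f reduces to d d = 0 for this bimodule. *)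

(* Reflexive normalization of Z-module identities: both sides are reified over
   a common list of atoms and compared through their integer coefficients. *)
Inductive zexpr : Type :=
  | ZAtom of nat | ZZero | ZOpp of zexpr | ZAdd of zexpr & zexpr.

Fixpoint zcoefs_add (s t : seq int) : seq int :=
  match s, t with
  | a :: s', b :: t' => (a + b) :: zcoefs_add s' t'
  | [::], _ => t
  | _, [::] => s
  end.

Fixpoint zcoefs (e : zexpr) : seq int :=
  match e with
  | ZAtom i => rcons (nseq i 0) 1
  | ZZero => [::]
  | ZOpp e1 => map -%R (zcoefs e1)
  | ZAdd e1 e2 => zcoefs_add (zcoefs e1) (zcoefs e2)
  end.

Section ZmodNormalForm.
Variable V : zmodType.

Fixpoint zeval (env : seq V) (e : zexpr) : V :=
  match e with
  | ZAtom i => env`_i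
  | ZZero => 0
  | ZOpp e1 => - zeval env e1
  | ZAdd e1 e2 => zeval env e1 + zeval env e2
  end.

Fixpoint zcomb (env : seq V) (s : seq int) : V :=
  if s is c :: s' then head 0 env *~ c + zcomb (behead env) s' else 0.

Lemma zcomb_add env s t : zcomb env (zcoefs_add s t) = zcomb env s + zcomb env t.
Proof.
elim: s t env => [|a s IHs] [|b t] env /=; rewrite ?addr0 ?add0r //.
by rewrite IHs mulrzDr addrACA.
Qed.

Lemma zcomb_opp env s : zcomb env (map -%R s) = - zcomb env s.
Proof. by elim: s env => [|a s IHs] env /=; rewrite ?oppr0 // IHs mulrNz opprD. Qed.

Lemma zcomb_atom env i : zcomb env (rcons (nseq i 0) 1) = env`_i.
Proof.
elim: i env => [|i IHi] [|x env] /=; rewrite ?mulr0z ?add0r ?addr0 //.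
by rewrite IHi ?nth_nil.
Qed.

Lemma zeval_zcomb env e : zeval env e = zcomb env (zcoefs e).
Proof.
by elim: e => [i||e1 IH1|e1 IH1 e2 IH2] /=;
  rewrite ?zcomb_atom ?zcomb_opp ?zcomb_add ?IH1 ?IH2.
Qed.

Lemma zcomb_eq0 env s : all (eq_op^~ 0) s -> zcomb env s = 0.
Proof. by elim: s env => [|c s IHs] env //= /andP[/eqP-> /IHs->]; rewrite mulr0z addr0. Qed.

Lemma zeval_eq env e1 e2 :
  all (eq_op^~ 0) (zcoefs (ZAdd e1 (ZOpp e2))) -> zeval env e1 = zeval env e2.
Proof.
move=> /(zcomb_eq0 env); rewrite -zeval_zcomb /= => /eqP.
by rewrite subr_eq0 => /eqP.
Qed.

End ZmodNormalForm.

Ltac zexpr_index t l :=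
  match l with
  | t :: _ => constr:(0%N)
  | _ :: ?l' => let n := zexpr_index t l' in constr:(n.+1)
  end.

Ltac zexpr_atoms t l :=
  match t with
  | ?a + ?b => let l' := zexpr_atoms a l in zexpr_atoms b l'
  | - ?a => zexpr_atoms a l
  | 0 => l
  | _ => match l with
         | _ => let _ := zexpr_index t l in l
         | _ => constr:(t :: l)
         end
  end.

Ltac zexpr_reify t l :=
  match t with
  | ?a + ?b =>
      let ea := zexpr_reify a l in let eb := zexpr_reify b l in constr:(ZAdd ea eb)
  | - ?a => let ea := zexpr_reify a l in constr:(ZOpp ea)
  | 0 => constr:(ZZero)
  | _ => let n := zexpr_index t l in constr:(ZAtom n)
  end.

Ltac abel :=
  match goal with
  | |- @eq ?V ?a ?b =>
      let l := zexpr_atoms a (@nil V) in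
      let l := zexpr_atoms b l in
      let ea := zexpr_reify a l in
      let eb := zexpr_reify b l in
      refine (@zeval_eq _ l ea eb _); vm_compute; reflexivity
  end.

Section Additive.
Variables U V : zmodType.

Lemma zmod_morphismD (g : U -> V) : zmod_morphism g -> {morph g : x y / x + y}.
Proof. by move=> gB; exact: (raddfD (HB.pack g (GRing.isZmodMorphism.Build _ _ g gB))). Qed.

Lemma zmod_morphismN (g : U -> V) : zmod_morphism g -> {morph g : x / - x}.
Proof. by move=> gB; exact: (raddfN (HB.pack g (GRing.isZmodMorphism.Build _ _ g gB))). Qed.

Lemma zmod_morphism0 (g : U -> V) : zmod_morphism g -> g 0 = 0.
Proof. by move=> gB; exact: (raddf0 (HB.pack g (GRing.isZmodMorphism.Build _ _ g gB))). Qed.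

End Additive.

Section Biadditive.
Variables U V W : zmodType.

Definition biadditive (g : U -> V -> W) : Prop :=
  (forall v, zmod_morphism (g^~ v)) /\ (forall u, zmod_morphism (g u)).

Variable g : U -> V -> W.
Hypothesis gB : biadditive g.

Lemma biaddDl u1 u2 v : g (u1 + u2) v = g u1 v + g u2 v.
Proof. exact: (zmod_morphismD (gB.1 v)). Qed.

Lemma biaddNl u v : g (- u) v = - g u v.
Proof. exact: (zmod_morphismN (gB.1 v)). Qed.

Lemma biaddDr u v1 v2 : g u (v1 + v2) = g u v1 + g u v2.
Proof. exact: (zmod_morphismD (gB.2 u)). Qed.

Lemma biaddNr u v : g u (- v) = - g u v.
Proof. exact: (zmod_morphismN (gB.2 u)). Qed.

End Biadditive.

Lemma multilinear1_zmod_morphism (K : fieldType) (U V : lmodType K) (g : U -> V) :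
  multilinear1 g -> zmod_morphism g.
Proof. by move=> gL x y; rewrite addrC -scaleN1r gL scaleN1r addrC. Qed.

Lemma multilinear2_biadditive (K : fieldType) (U V : lmodType K) (g : U -> U -> V) :
  multilinear2 g -> biadditive g.
Proof.
by case=> gLl gLr; split=> u; apply: multilinear1_zmod_morphism => a x y; rewrite ?gLl ?gLr.
Qed.

(* Only biadditivity is required, not K-bilinearity: the coboundary identities
   never use the scalar action. *)
Record zinb_bimodule (R A : zmodType) (mul : R -> R -> R)
    (lact : R -> A -> A) (ract : A -> R -> A) : Prop := ZinbBimodule {
  bimod_mul : biadditive mul;
  bimod_lact : biadditive lact;
  bimod_ract : biadditive ract;
  bimod_zinbiel : forall x y z, mul (mul x y) z = mul x (mul y z) + mul x (mul z y);
  bimod_lact_mul : forall x y a, lact (mul x y) a = lact x (lact y a) + lact x (ract a y);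
  bimod_ract_lact : forall x a y, ract (lact x a) y = lact x (ract a y) + lact x (lact y a);
  bimod_ract_ract : forall a x y, ract (ract a x) y = ract a (mul x y) + ract a (mul y x)
}.

Lemma zinbiel_bimodule_regular (K : fieldType) (R : lmodType K) (mul : R -> R -> R) :
  is_zinbiel mul -> zinb_bimodule mul mul mul.
Proof.
case=> mulLl mulLr mulA.
have mulB : biadditive mul by apply: multilinear2_biadditive.
by split.
Qed.

Lemma zinbiel_bimodule_morph (K : fieldType) (R S : lmodType K)
    (mulR : R -> R -> R) (mulS : S -> S -> S) (f : R -> S) :
  is_zinbiel mulR -> is_zinbiel mulS -> is_zinb_morphism mulR mulS f ->
  zinb_bimodule mulR (lactf mulS f) (ractf mulS f).
Proof.
move=> /zinbiel_bimodule_regular [mulRB _ _ mulRA _ _ _].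
move=> /zinbiel_bimodule_regular [mulSB _ _ mulSA _ _ _].
case=> /multilinear1_zmod_morphism fB fM.
have fD := zmod_morphismD fB; have fN := zmod_morphismN fB.
split=> //; rewrite /lactf /ractf.
1,2: by split=> ? u v; rewrite ?fD ?fN ?(biaddDl mulSB) ?(biaddNl mulSB)
                                ?(biaddDr mulSB) ?(biaddNr mulSB).
- by move=> x y a; rewrite fM mulSA.
- by move=> x a y; rewrite mulSA.
- by move=> a x y; rewrite !fM mulSA.
Qed.

Section ZinbielCochains.
Variables (K : fieldType) (R A : lmodType K).
Variables (mul : R -> R -> R) (lact : R -> A -> A) (ract : A -> R -> A).
Hypothesis bimod : zinb_bimodule mul lact ract.

Let bimodE :=
  (biaddDl (bimod_mul bimod), biaddNl (bimod_mul bimod),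
   biaddDr (bimod_mul bimod), biaddNr (bimod_mul bimod),
   biaddDl (bimod_lact bimod), biaddNl (bimod_lact bimod),
   biaddDr (bimod_lact bimod), biaddNr (bimod_lact bimod),
   biaddDl (bimod_ract bimod), biaddNl (bimod_ract bimod),
   biaddDr (bimod_ract bimod), biaddNr (bimod_ract bimod),
   bimod_zinbiel bimod, bimod_lact_mul bimod,
   bimod_ract_lact bimod, bimod_ract_ract bimod).

Lemma zd1_sub (phi psi : R -> A) x y :
  zd1 mul lact ract (fun t => phi t - psi t) x y
  = zd1 mul lact ract phi x y - zd1 mul lact ract psi x y.
Proof. rewrite /zd1 ?bimodE; abel. Qed.

Lemma zd1_0 x y : zd1 mul lact ract (fun=> 0) x y = 0.
Proof.
by rewrite /zd1 (zmod_morphism0 ((bimod_lact bimod).2 x))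
  (zmod_morphism0 ((bimod_ract bimod).1 y)) subrr addr0.
Qed.

Lemma zd2_sub (phi psi : R -> R -> A) x y z :
  zd2 mul lact ract (fun s t => phi s t - psi s t) x y z
  = zd2 mul lact ract phi x y z - zd2 mul lact ract psi x y z.
Proof. rewrite /zd2 ?bimodE; abel. Qed.

Lemma zd2_zd1 (phi : R -> A) : zmod_morphism phi ->
  forall x y z, zd2 mul lact ract (zd1 mul lact ract phi) x y z = 0.
Proof.
move=> phiB x y z; rewrite /zd2 /zd1.
do ?progress rewrite ?bimodE ?(zmod_morphismD phiB) ?(zmod_morphismN phiB).
abel.
Qed.

Lemma zd3_zd2 (phi : R -> R -> A) : biadditive phi ->
  forall x y z w, zd3 mul lact ract (zd2 mul lact ract phi) x y z w = 0.
Proof.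
move=> phiB x y z w; rewrite /zd3 /zd2.
do ?progress rewrite ?bimodE
  ?(biaddDl phiB) ?(biaddNl phiB) ?(biaddDr phiB) ?(biaddNr phiB).
abel.
Qed.

End ZinbielCochains.

Section ZinbielMorphism.
Variables (K : fieldType) (R S : lmodType K).
Variables (mulR : R -> R -> R) (mulS : S -> S -> S) (f : R -> S).
Hypothesis fB : zmod_morphism f.
Hypothesis fM : forall x y, f (mulR x y) = mulS (f x) (f y).

Local Notation lact := (lactf mulS f).
Local Notation ract := (ractf mulS f).
Let fD := zmod_morphismD fB.
Let fN := zmod_morphismN fB.

Lemma zd1_comp (xi : R -> R) x y :
  zd1 mulR lact ract (fun t => f (xi t)) x y = f (zd1 mulR mulR mulR xi x y).
Proof. by rewrite /zd1 !fD fN !fM. Qed.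

Lemma zd1_precomp (pi : S -> S) x y :
  zd1 mulR lact ract (fun t => pi (f t)) x y = zd1 mulS mulS mulS pi (f x) (f y).
Proof. by rewrite /zd1 fM. Qed.

Lemma zd2_comp (xi : R -> R -> R) x y z :
  zd2 mulR lact ract (fun s t => f (xi s t)) x y z
  = f (zd2 mulR mulR mulR xi x y z).
Proof. by rewrite /zd2 !fD !fN !fM fD. Qed.

Lemma zd2_precomp (pi : S -> S -> S) x y z :
  zd2 mulR lact ract (fun s t => pi (f s) (f t)) x y z
  = zd2 mulS mulS mulS pi (f x) (f y) (f z).
Proof. by rewrite /zd2 fD !fM. Qed.

End ZinbielMorphism.



Theorem lemma2p1 (K : fieldType) (R S : lmodType K)
  (mulR : R -> R -> R) (mulS : S -> S -> S) (f : R -> S) :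
  is_zinbiel mulR -> is_zinbiel mulS -> is_zinb_morphism mulR mulS f ->
  (* i = 1 : d^2_f o d^1_f = 0 on C^1(f,f) *)
  (forall (xi : R -> R) (pi : S -> S) (u : unit),
     multilinear1 xi -> multilinear1 pi ->
     let: (a, b, c) := df2 mulR mulS f (df1 mulR mulS f (xi, pi, u)) in
     (forall x y z : R, a x y z = 0) /\
     (forall x y z : S, b x y z = 0) /\
     (forall x y : R, c x y = 0)) /\
  (* i = 2 : d^3_f o d^2_f = 0 on C^2(f,f) *)
  (forall (xi : R -> R -> R) (pi : S -> S -> S) (phi : R -> S),
     multilinear2 xi -> multilinear2 pi -> multilinear1 phi ->
     let: (a, b, c) := df3 mulR mulS f (df2 mulR mulS f (xi, pi, phi)) in
     (forall x y z w : R, a x y z w = 0) /\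
     (forall x y z w : S, b x y z w = 0) /\
     (forall x y z : R, c x y z = 0)).
Proof.
move=> Rz Sz fz.
have Rbimod := zinbiel_bimodule_regular Rz.
have Sbimod := zinbiel_bimodule_regular Sz.
have fbimod := zinbiel_bimodule_morph Rz Sz fz.
have [/multilinear1_zmod_morphism fB fM] := fz.
split=> [xi pi _ /multilinear1_zmod_morphism xiB /multilinear1_zmod_morphism piB
        |xi pi phi /multilinear2_biadditive xiB /multilinear2_biadditive piB
         /multilinear1_zmod_morphism phiB] /=.
- split; [apply: (zd2_zd1 Rbimod xiB) | split; [apply: (zd2_zd1 Sbimod piB) | move=> x y]].
  by rewrite !(zd1_sub fbimod) (zd1_0 fbimod) (zd1_comp fB fM) (zd1_precomp fM) subr0 subrr.
- split; [apply: (zd3_zd2 Rbimod xiB) | split; [apply: (zd3_zd2 Sbimod piB) | move=> x y z]].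
  rewrite !(zd2_sub fbimod) (zd2_comp fB fM) (zd2_precomp fB fM).
  by rewrite (zd2_zd1 fbimod phiB) subr0 subrr.
Qed.
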